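(* For any $a,b\in\mathbb{N}$, the closure of the arithmetic progression $a+b\mathbb{N}_0$ in the Kirch space $(\mathbb{N},\tau_K)$ equals $\mathbb{N}\cap\bigcap_{p\in\Pi_b}\big(\{0,a\}+p\mathbb{Z}\big)$.
   Context: $\mathbb{N}=\{1,2,3,\dots\}$, $\mathbb{N}_0=\{0\}\cup\mathbb{N}$, $a+b\mathbb{N}_0=\{a+bn:n\in\mathbb{N}_0\}$. For $x\in\mathbb{N}$, $\Pi_x$ is the set of prime divisors of $x$. For sets $S,T$ of integers, $S+T=\{s+t:s\in S,t\in T\}$; so $\{0,a\}+p\mathbb{Z}=p\mathbb{Z}\cup(a+p\mathbb{Z})$. The Kirch topology $\tau_K$ on $\mathbb{N}$ is generated by the base of all $a+b\mathbb{N}_0$ with $a,b\in\mathbb{N}$ coprime and $b$ square-free (not divisible by the square of a prime). *)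

From mathcomp Require Import all_boot.
Set Implicit Arguments. Unset Strict Implicit. Unset Printing Implicit Defensive.

(* Subsets of nat are predicates nat -> Prop.  The space is N = {1,2,...},
   i.e. the elements x with 0 < x. *)
Definition natset := nat -> Prop.

Definition inN : natset := fun x => 0 < x.

Definition squarefree (b : nat) : Prop :=
  forall p, prime p -> ~~ (p * p %| b).

Definition AP (a b : nat) : natset := fun n => exists k, n = a + b * k.

Definition kirch_basic (a b : nat) : Prop :=
  [/\ 0 < a, 0 < b, coprime a b & squarefree b].

Definition kirch_open (U : natset) : Prop :=
  (forall x, U x -> inN x) /\
  (forall x, U x -> exists a b, [/\ kirch_basic a b, AP a b x &
                                    forall y, AP a b y -> U y]).

Definition kirch_closure (A : natset) : natset :=
  fun x => inN x /\ forall U, kirch_open U -> U x -> exists y, U y /\ A y.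

Definition rhs_set (a b : nat) : natset :=
  fun x => inN x /\ forall p, prime p -> p %| b -> (p %| x) \/ (x = a %[mod p]).

From mathcomp Require Import all_boot zify.

(* If p | b and p does not divide the closure point x, the basic set
   (x mod p) + pN_0 is a neighbourhood of x; any of its points in a + bN_0 is
   congruent both to x and to a modulo p.  Conversely, let a' + b'N_0 be a
   basic neighbourhood of x.  Every prime q dividing both b' and b is coprime
   to x, so x = a (mod q); as b' is square-free this yields
   x = a (mod gcd(b', b)), which is exactly the solvability condition of the
   system y = x (mod b'), y = a (mod b), and a solution y >= x lies in both
   progressions. *)

Set Implicit Arguments.
Unset Strict Implicit.

Lemma APP a b y : AP a b y <-> a <= y /\ y = a %[mod b].
Proof.
split=> [[k ->]|[le_ay /eqP]]; first by rewrite leq_addr addnC mulnC modnMDl.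
by rewrite eqn_mod_dvd // => /dvdnP[k def_y]; exists k; lia.
Qed.

Lemma AP_trans a b x y : AP a b x -> AP x b y -> AP a b y.
Proof. by move=> [k ->] [l ->]; exists (k + l); rewrite mulnDr addnA. Qed.

Lemma AP_coprime a b x : coprime a b -> AP a b x -> coprime x b.
Proof. by move=> co_ab /APP[_ x_a]; rewrite -coprime_modl x_a coprime_modl. Qed.

Lemma eq_mod_dvd d m u v : d %| m -> u = v %[mod m] -> u = v %[mod d].
Proof. by move=> dv_dm uv; rewrite -(modn_dvdm u dv_dm) uv modn_dvdm. Qed.

Lemma squarefree_prime p : prime p -> squarefree p.
Proof.
move=> p_pr q q_pr; apply/negP => dv_qqp.
have /eqP eq_qp : q == p.
  by rewrite -dvdn_prime2 // (dvdn_trans (dvdn_mulr q (dvdnn q)) dv_qqp).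
move: dv_qqp; rewrite eq_qp -{3}(muln1 p) dvdn_pmul2l ?prime_gt0 // dvdn1.
by move/eqP=> p1; rewrite p1 in p_pr.
Qed.

Lemma squarefree_dvd d m : d %| m -> squarefree m -> squarefree d.
Proof.
by move=> dv_dm sq_m p p_pr; apply: contra (sq_m p p_pr) => /dvdn_trans->.
Qed.

Lemma eqmod_squarefree m x y : 0 < m -> squarefree m ->
  (forall p, prime p -> p %| m -> x = y %[mod p]) -> x = y %[mod m].
Proof.
elim/ltn_ind: m => m IH m_gt0 sq_m xy_p.
have [m_le1|m_gt1] := leqP m 1.
  have -> : m = 1 by apply/eqP; rewrite eqn_leq m_le1.
  by rewrite !modn1.
set p := pdiv m; set h := m %/ p.
have p_pr : prime p by apply: pdiv_prime.
have def_m : m = p * h by rewrite /h mulnC divnK // pdiv_dvd.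
have h_gt0 : 0 < h by move: m_gt0; rewrite def_m muln_gt0 => /andP[].
have co_ph : coprime p h.
  rewrite prime_coprime //; apply: contra (sq_m p p_pr) => dv_ph.
  by rewrite def_m dvdn_pmul2l ?prime_gt0.
have dv_hm : h %| m by rewrite def_m dvdn_mull.
apply/eqP; rewrite def_m chinese_remainder //; apply/andP; split; apply/eqP.
  by apply: xy_p; rewrite ?pdiv_dvd.
apply: IH => //.
- by rewrite def_m ltn_Pmull ?prime_gt1.
- exact: squarefree_dvd sq_m.
- by move=> q q_pr dv_qh; apply: xy_p => //; apply: dvdn_trans dv_hm.
Qed.

Lemma AP_meet m b x a : 0 < m -> 0 < b -> x = a %[mod gcdn m b] ->
  exists y, AP x m y /\ AP a b y.
Proof.
move=> m_gt0 b_gt0 xa; have [u v def_um _] := egcdnP b m_gt0.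
have /dvdnP[q def_q] : gcdn m b %| a + b * x - x.
  rewrite -eqn_mod_dvd; last by nia.
  apply/eqP; rewrite xa; apply: eq_mod_dvd (dvdn_gcdr m b) _.
  by rewrite addnC mulnC modnMDl.
(* Bezout: u * m = g (mod b), so m * (u * q) = g * q = a + b * x - x (mod b). *)
exists (x + m * (u * q)); split; first by exists (u * q).
exists (x + v * q).
have -> : m * (u * q) = v * b * q + q * gcdn m b.
  by rewrite mulnA (mulnC m) def_um mulnDl (mulnC (gcdn m b)).
nia.
Qed.

Lemma kirch_basic_open a b : kirch_basic a b -> kirch_open (AP a b).
Proof.
move=> ab_basic; have [a_gt0 _ _ _] := ab_basic.
by split=> [y [k ->]|y ab_y]; [rewrite /inN ltn_addr | exists a, b].
Qed.

Lemma kirch_closure_AP_sub_rhs a b x : kirch_closure (AP a b) x -> rhs_set a b x.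
Proof.
move=> [x_gt0 cl_x]; split=> // p p_pr dv_pb.
have [dv_px|ndv_px] := boolP (p %| x); [by left | right].
have r_basic : kirch_basic (x %% p) p.
  split; [by rewrite lt0n | exact: prime_gt0 | | exact: squarefree_prime].
  by rewrite coprime_modl coprime_sym prime_coprime.
have x_r : AP (x %% p) p x by apply/APP; rewrite leq_mod modn_mod.
have [y [/APP[_ y_x] /APP[_ y_a]]] := cl_x _ (kirch_basic_open r_basic) x_r.
by rewrite -modn_mod -y_x; apply: eq_mod_dvd dv_pb y_a.
Qed.

Lemma rhs_sub_kirch_closure_AP a b x :
  0 < b -> rhs_set a b x -> kirch_closure (AP a b) x.
Proof.
move=> b_gt0 [x_gt0 rhs_x]; split=> // U [_ U_open] U_x.
have [a' [b' [[_ b'_gt0 co_ab' sq_b'] ab'_x sub_U]]] := U_open x U_x.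
have co_xb' := AP_coprime co_ab' ab'_x.
have x_a : x = a %[mod gcdn b' b].
  apply: eqmod_squarefree; first by rewrite gcdn_gt0 b'_gt0.
    exact: squarefree_dvd (dvdn_gcdl _ _) sq_b'.
  move=> q q_pr; rewrite dvdn_gcd => /andP[dv_qb' dv_qb].
  case: (rhs_x q q_pr dv_qb) => // dv_qx.
  by move: (coprime_dvdl dv_qx co_xb'); rewrite prime_coprime // dv_qb'.
have [y [x_y a_y]] := AP_meet b'_gt0 b_gt0 x_a.
by exists y; split=> //; apply/sub_U/(AP_trans ab'_x x_y).
Qed.

Theorem lemma3p1 (a b : nat) : 0 < a -> 0 < b ->
  forall x : nat, kirch_closure (AP a b) x <-> rhs_set a b x.
Proof.
move=> _ b_gt0 x; split; first exact: kirch_closure_AP_sub_rhs.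
exact: rhs_sub_kirch_closure_AP.
Qed.
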